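(* Let $L(0,n-1)$ be a path with thresholds $t$ as in the context, let $\lambda\ge1$, and let $0\le j<k\le n-1$ be such that $t(j)=t(k)=1$ and $t(j+1)=\cdots=t(k-1)=2$. Let $p:V\to\{0,1,2\}$ be any incentive function that solves the TBI problem on $L(0,n-1)$ with time bound $\lambda$ (i.e. $\mathsf{Influenced}[p,\lambda]=V$). Then $$\sum_{i=j+1}^{k-1}p(i)\ \ge\ \begin{cases} k-j-2 & \text{if $j+1$ is influenced by $j$ and $k-1$ is influenced by $k$},\\ k-j-1 & \text{if exactly one of: $j+1$ is influenced by $j$, $k-1$ is influenced by $k$},\\ k-j & \text{otherwise.}\end{cases}$$
   Context: Influence model: a network is a graph $G=(V,E)$; $N(v)$ is the neighbourhood of $v$ and $d(v)=|N(v)|$. A threshold function $t:V\to\{1,2,\dots\}$ satisfies $1\le t(v)\le d(v)$. An incentive function is $p:V\to\{0,1,2,\dots\}$ with $0\le p(v)\le t(v)$. The influence process starting from $p$: $\mathsf{Influenced}[p,0]=\{v: p(v)=t(v)\}$ and, for $\ell>0$, $\mathsf{Influenced}[p,\ell]=\mathsf{Influenced}[p,\ell-1]\cup\{v: |N(v)\cap \mathsf{Influenced}[p,\ell-1]|\ge t(v)-p(v)\}$. A node $v$ is influenced at round $\ell$ if it belongs to $\mathsf{Influenced}[p,\ell]$ but not to $\mathsf{Influenced}[p,\ell-1]$ (round $0$: belongs to $\mathsf{Influenced}[p,0]$). The TBI problem with time bound $\lambda$ asks for minimum-cost $p$ with $\mathsf{Influenced}[p,\lambda]=V$. The path $L(0,n-1)$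 has nodes $0,\dots,n-1$ and edges $\{i,i+1\}$, $0\le i\le n-2$; $t(0)=t(n-1)=1$ and $t(i)\in\{1,2\}$ for $1\le i\le n-2$. For neighbours $u,w$, ''$u$ is influenced by $w$'' means that $w$ is influenced at a round strictly earlier than the round at which $u$ is influenced (so $w$ contributes to the influence received by $u$). *)

From mathcomp Require Import all_boot.
Set Implicit Arguments. Unset Strict Implicit. Unset Printing Implicit Defensive.

(* The path L(0,n-1): nodes 0..n-1, edges {i,i+1}.  Thresholds t and
   incentives p are functions nat -> nat; only their values on 0..n-1 matter. *)

Definition node (n v : nat) : bool := v < n.

Definition deg (n v : nat) : nat := (0 < v) + (v.+1 < n).

Definition nbr_count (n : nat) (S : nat -> bool) (v : nat) : nat :=
  ((0 < v) && S v.-1) + ((v.+1 < n) && S v.+1).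

Fixpoint influenced (n : nat) (t p : nat -> nat) (l : nat) : nat -> bool :=
  match l with
  | 0 => fun v => node n v && (p v == t v)
  | l'.+1 => fun v =>
      influenced n t p l' v ||
      (node n v && (t v - p v <= nbr_count n (influenced n t p l') v))
  end.

Definition influenced_at (n : nat) (t p : nat -> nat) (l v : nat) : Prop :=
  influenced n t p l v /\ (l = 0 \/ ~~ influenced n t p l.-1 v).

Definition influenced_by (n : nat) (t p : nat -> nat) (u w : nat) : Prop :=
  exists lu lw, influenced_at n t p lu u /\ influenced_at n t p lw w /\ lw < lu.

Definition path_threshold (n : nat) (t : nat -> nat) : Prop :=
  t 0 = 1 /\ t n.-1 = 1 /\
  (forall i, 0 < i < n.-1 -> t i = 1 \/ t i = 2) /\
  (forall v, v < n -> 1 <= t v <= deg n v).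

Definition incentive (n : nat) (t p : nat -> nat) : Prop :=
  forall v, v < n -> p v <= t v /\ p v <= 2.

Definition solves_TBI (n : nat) (t p : nat -> nat) (lambda : nat) : Prop :=
  forall v, v < n -> influenced n t p lambda v.

(** Every node is eventually influenced, so it has a first round [r v].  A
    node [i] strictly inside the block has threshold 2, and at round [r i] its
    missing [2 - p i] units of influence must come from neighbours with an
    earlier round.  Summing over the block, every inner edge is counted at most
    once (only its earlier endpoint helps the later one), while the two boundary
    edges [(j, j+1)] and [(k, k-1)] count exactly when [j+1] is influenced by
    [j], resp. [k-1] by [k].  Hence [2 (k-j-1) - sum p <= (k-j-2) + [A] + [B]]. *)

From mathcomp Require Import all_boot.
From mathcomp Require Import zify.

Set Implicit Arguments.
Unset Strict Implicit.
Unset Printing Implicit Defensive.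

Lemma influenced_mono n t p l d v :
  influenced n t p l v -> influenced n t p (l + d) v.
Proof. by elim: d => [|d IHd]; rewrite ?addn0 // addnS /= => /IHd ->. Qed.

Section FirstRound.

Variables (n : nat) (t p : nat -> nat) (lambda : nat).
Hypothesis solves : solves_TBI n t p lambda.

Definition first_round (v : nat) : nat :=
  find (fun l => influenced n t p l v) (iota 0 lambda.+1).

Lemma influenced_first_round l v :
  v < n -> influenced n t p l v = (first_round v <= l).
Proof.
move=> vn; set P := fun l => influenced n t p l v.
have hasP_v : has P (iota 0 lambda.+1).
  by apply/hasP; exists lambda; [rewrite mem_iota; lia | exact: solves].
have r_lt : first_round v < lambda.+1.
  by rewrite -[lambda.+1](size_iota 0) -has_find.
have P_r : P (first_round v) by have := nth_find 0 hasP_v; rewrite nth_iota.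
apply/idP/idP => [Pl | r_le].
  rewrite leqNgt; apply/negP => l_lt.
  have := before_find 0 l_lt.
  by rewrite nth_iota ?(ltn_trans l_lt) // add0n Pl.
by rewrite -(subnKC r_le); apply: influenced_mono.
Qed.

Lemma influenced_atE l v :
  v < n -> influenced_at n t p l v <-> l = first_round v.
Proof.
move=> vn; rewrite /influenced_at !influenced_first_round //; split.
  case=> r_le [l0 | /negbTE]; first by move: r_le; rewrite l0; lia.
  by case: l r_le => [|l] r_le /= /negbT; lia.
move=> ->; split=> //.
by case: (first_round v) => [|r]; [left | right; rewrite /= ltnn].
Qed.

Lemma influenced_byE u w :
  u < n -> w < n -> influenced_by n t p u w <-> first_round w < first_round u.
Proof.
move=> un wn; split.
  by case=> lu [lw [/influenced_atE -> // [/influenced_atE -> //]]].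
by exists (first_round u), (first_round w); rewrite !influenced_atE.
Qed.

Lemma missing_influence_le i : 0 < i -> i.+1 < n ->
  t i - p i <= (first_round i.-1 < first_round i)
             + (first_round i.+1 < first_round i).
Proof.
move=> i_gt0 i1n; have i_lt : i < n := ltnW i1n.
have infl_r l : influenced n t p l i = (first_round i <= l).
  exact: influenced_first_round.
case r_i: (first_round i) => [|l].
  have := infl_r 0; rewrite r_i /= => /andP [_ /eqP ->].
  by rewrite subnn.
have := infl_r l.+1; have := infl_r l; rewrite r_i ltnn leqnn /= => -> /=.
rewrite /nbr_count i_gt0 i1n /= => /andP [_].
by rewrite !influenced_first_round ?ltnS //; lia.
Qed.

End FirstRound.

(** Each edge [(i, i+1)] contributes [r i < r i.+1] at [i+1] and
    [r i.+1 < r i] at [i], and these cannot both be [1]. *)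
Lemma sum_earlier_neighbours_le (r : nat -> nat) a b :
  \sum_(a.+1 <= i < b) ((r i.-1 < r i) + (r i.+1 < r i))
    <= (r a < r a.+1) + (b - a.+2) + (r b < r b.-1).
Proof.
elim: b => [|b IHb]; first by rewrite big_geq.
case: (ltngtP b a.+1) => [b_lt | b_gt | ->].
- by rewrite big_geq.
- rewrite big_nat_recr /=; last by lia.
  move: IHb; case: b b_gt => // b b_gt /=.
  by case: (ltngtP (r b) (r b.+1)); lia.
- by rewrite big_nat1 subnn addn0.
Qed.

Lemma block_incentive_lower_bound n t p lambda j k :
  solves_TBI n t p lambda -> incentive n t p ->
  j.+1 < k -> k < n -> (forall i, j < i < k -> t i = 2) ->
  k - j <= \sum_(j.+1 <= i < k) p i
           + (first_round n t p lambda j < first_round n t p lambda j.+1)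
           + (first_round n t p lambda k < first_round n t p lambda k.-1).
Proof.
move=> solves inc jk kn t2; set r := first_round n t p lambda.
have missing_le : \sum_(j.+1 <= i < k) (2 - p i)
    <= \sum_(j.+1 <= i < k) ((r i.-1 < r i) + (r i.+1 < r i)).
  rewrite !big_nat; apply: leq_sum => i /andP [ji ik].
  by rewrite -(t2 i) ?ji //; apply: missing_influence_le => //; lia.
have block_sum : \sum_(j.+1 <= i < k) p i + \sum_(j.+1 <= i < k) (2 - p i)
    = (k - j.+1) * 2.
  rewrite -big_split /= -sum_nat_const_nat !big_nat.
  apply: eq_bigr => i /andP [ji ik].
  by have [p_le _] := inc i (ltn_trans ik kn); rewrite t2 ?ji // in p_le; lia.
have := sum_earlier_neighbours_le r j k; lia.
Qed.

Theorem lemma1 (n : nat) (t p : nat -> nat) (lambda j k : nat) :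
  path_threshold n t ->
  1 <= lambda ->
  j.+1 < k -> k <= n.-1 ->
  t j = 1 -> t k = 1 -> (forall i, j < i < k -> t i = 2) ->
  incentive n t p ->
  solves_TBI n t p lambda ->
  let A := influenced_by n t p j.+1 j in
  let B := influenced_by n t p k.-1 k in
  (A /\ B -> k - j - 2 <= \sum_(j.+1 <= i < k) p i) /\
  ((A /\ ~ B) \/ (~ A /\ B) -> k - j - 1 <= \sum_(j.+1 <= i < k) p i) /\
  (~ A /\ ~ B -> k - j <= \sum_(j.+1 <= i < k) p i).
Proof.
move=> _ _ jk kn _ _ t2 inc solves A B.
have kn' : k < n by lia.
have := block_incentive_lower_bound solves inc jk kn' t2.
by rewrite /A /B !(influenced_byE solves); lia.
Qed.
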